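(* Let $M, N$ be $\lambda$-terms with $M \twoheadrightarrow_\beta N$. Then $M$ and $N$ have the same Böhm tree, and $\mathrm{cBT}(M) \ge \mathrm{cBT}(N)$; i.e. at every position either both clocked Böhm trees are unannotated, or both are annotated, with natural numbers $k_1$ (in $\mathrm{cBT}(M)$) and $k_2$ (in $\mathrm{cBT}(N)$) satisfying $k_1 \ge k_2$. (Clocks are accelerated under reduction and slowed down under expansion.)
   Context: Untyped $\lambda$-calculus with $\beta$-reduction; $\twoheadrightarrow_\beta$ is its reflexive–transitive closure. A head reduction step is a step $\lambda x_1\ldots x_n.(\lambda y.P)Q Q_1\ldots Q_m \to \lambda x_1\ldots x_n.P[y:=Q] Q_1\ldots Q_m$ ($n,m\ge0$); a head normal form (hnf) is a term $\lambda x_1\ldots x_n.\,y M_1\ldots M_m$; a term has an hnf if it reduces to one. The clocked Böhm tree $\mathrm{cBT}(t)$ is the (possibly infinite) annotated term defined coinductively: if $t$ has no hnf, $\mathrm{cBT}(t) = \bot$ (unannotated); otherwise there is a head reduction of some length $k$ from $t$ to an hnf $\lambda x_1\ldots x_n.\,y M_1\ldots M_m$, and $\mathrm{cBT}(t)$ is the term $\lambda x_1\ldots x_n.\,y\,\mathrm{cBT}(M_1)\ldots\mathrm{cBT}(M_m)$ whose root is annotated with $k$. The Böhm tree $\mathrm{BT}(t)$ is obtained from $\mathrm{cBT}(t)$ by erasing all annotations. Positions in such trees are finite sequences over $\{0,1,2\}$ (0: body of an abstraction, 1: function part of an application, 2: argument part). *)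

From Stdlib Require Import Arith List Relations.
Import ListNotations.

Inductive term : Type :=
| Var : nat -> term
| Lam : term -> term
| App : term -> term -> term.

Fixpoint lift (d k : nat) (t : term) : term :=
  match t with
  | Var n => if n <? k then Var n else Var (n + d)
  | Lam b => Lam (lift d (S k) b)
  | App f a => App (lift d k f) (lift d k a)
  end.

Fixpoint subst (u : term) (k : nat) (t : term) : term :=
  match t with
  | Var n => if n <? k then Var n
             else if n =? k then lift k 0 u
             else Var (n - 1)
  | Lam b => Lam (subst u (S k) b)
  | App f a => App (subst u k f) (subst u k a)
  end.

Inductive beta : term -> term -> Prop :=
| beta_redex : forall P Q, beta (App (Lam P) Q) (subst Q 0 P)
| beta_lam : forall t t', beta t t' -> beta (Lam t) (Lam t')
| beta_appl : forall f f' a, beta f f' -> beta (App f a) (App f' a)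
| beta_appr : forall f a a', beta a a' -> beta (App f a) (App f a').

Definition betas : term -> term -> Prop := clos_refl_trans term beta.

Definition isLam (t : term) : Prop :=
  match t with Lam _ => True | _ => False end.

(* head reduction step:
   \x1..xn.(\y.P) Q Q1..Qm -> \x1..xn. P[y:=Q] Q1..Qm *)
Inductive hred : term -> term -> Prop :=
| hred_redex : forall P Q, hred (App (Lam P) Q) (subst Q 0 P)
| hred_app : forall f f' a, ~ isLam f -> hred f f' -> hred (App f a) (App f' a)
| hred_lam : forall t t', hred t t' -> hred (Lam t) (Lam t').

Inductive hreds : nat -> term -> term -> Prop :=
| hreds_refl : forall t, hreds 0 t t
| hreds_step : forall k t u v, hred t u -> hreds k u v -> hreds (S k) t v.

Inductive neutral : term -> Prop :=
| neutral_var : forall n, neutral (Var n)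
| neutral_app : forall f a, neutral f -> neutral (App f a).

Inductive is_hnf : term -> Prop :=
| hnf_neutral : forall t, neutral t -> is_hnf t
| hnf_lam : forall t, is_hnf t -> is_hnf (Lam t).

Definition has_hnf (t : term) : Prop := exists h, betas t h /\ is_hnf h.

(* positions: 0 = body of abstraction, 1 = function part, 2 = argument part *)
Inductive dir : Type := D0 | D1 | D2.
Definition position := list dir.

Inductive label : Type :=
| LBot : label
| LLam : label
| LApp : label
| LVar : nat -> label.

(* cbt_at t p l a : in cBT(t), position p exists, carries label l and
   annotation a (None = unannotated, Some k = clock k).
   skel_at h p l a : same, walking through the top part of an hnf h;
   arguments M_i of the hnf are continued with cBT(M_i). *)
Inductive cbt_at : term -> position -> label -> option nat -> Prop :=
| cbt_bot : forall t, ~ has_hnf t -> cbt_at t [] LBot None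
| cbt_root : forall t k h l a,
    hreds k t h -> is_hnf h -> skel_at h [] l a -> cbt_at t [] l (Some k)
| cbt_sub : forall t k h d p l a,
    hreds k t h -> is_hnf h -> skel_at h (d :: p) l a -> cbt_at t (d :: p) l a
with skel_at : term -> position -> label -> option nat -> Prop :=
| skel_var : forall n, skel_at (Var n) [] (LVar n) None
| skel_lam : forall b, skel_at (Lam b) [] LLam None
| skel_lam_body : forall b p l a, skel_at b p l a -> skel_at (Lam b) (D0 :: p) l a
| skel_app : forall f u, skel_at (App f u) [] LApp None
| skel_app_fun : forall f u p l a, skel_at f p l a -> skel_at (App f u) (D1 :: p) l a
| skel_app_arg : forall f u p l a, cbt_at u p l a -> skel_at (App f u) (D2 :: p) l a.

Definition ann_ge (a1 a2 : option nat) : Prop :=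
  match a1, a2 with
  | None, None => True
  | Some k1, Some k2 => k2 <= k1
  | _, _ => False
  end.

(* By standardization, a term has an hnf iff its head reduction terminates.
   A head step of M is either absorbed by a parallel reduct N of M or is
   simulated by exactly one head step of N, with the contracta again related
   by parallel reduction. Hence if M ->>_beta N and M head-reduces to an hnf
   in k steps, N head-reduces to an hnf in at most k steps, and the two hnfs
   have the same spine with beta-related arguments. Since head normal forms
   and their lengths are unique, an induction on positions compares cBT(M)
   and cBT(N) node by node. *)

From Stdlib Require Import Arith List Relations Lia.
Import ListNotations.

(** * De Bruijn algebra *)

Ltac index_cases :=
  repeat (simpl; match goal with
                 | |- context [?a <? ?b] => destruct (Nat.ltb_spec a b)
                 | |- context [?a =? ?b] => destruct (Nat.eqb_spec a b)
                 end);
  simpl; try (f_equal; lia); try lia.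

Lemma lift_lift : forall t i k n m, i <= k <= i + n ->
  lift m k (lift n i t) = lift (m + n) i t.
Proof.
  induction t; intros; simpl; [index_cases | f_equal; apply IHt; lia | f_equal; auto].
Qed.

Lemma lift_lift_comm : forall t i k m n, i <= k ->
  lift m i (lift n k t) = lift n (m + k) (lift m i t).
Proof.
  induction t; intros; simpl; [index_cases | | f_equal; auto].
  f_equal. rewrite IHt by lia. f_equal; lia.
Qed.

Lemma subst_lift : forall t u i j n, i <= j <= i + n ->
  subst u j (lift (S n) i t) = lift n i t.
Proof.
  induction t; intros; simpl; [index_cases | f_equal; apply IHt; lia | f_equal; auto].
Qed.

Lemma subst_lift_comm : forall t u i k n, i <= k ->
  subst u (n + k) (lift n i t) = lift n i (subst u k t).
Proof.
  induction t; intros; simpl.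
  - index_cases. subst. rewrite lift_lift by lia. f_equal; lia.
  - f_equal. rewrite <- IHt by lia. f_equal; lia.
  - f_equal; auto.
Qed.

Lemma lift_subst : forall t u j k d, j <= k ->
  lift d k (subst u j t) = subst (lift d (k - j) u) j (lift d (S k) t).
Proof.
  induction t; intros; simpl.
  - index_cases. subst n. rewrite (lift_lift_comm u 0 (k - j) j d) by lia. f_equal; lia.
  - f_equal. rewrite IHt by lia. reflexivity.
  - f_equal; auto.
Qed.

Lemma subst_subst : forall t u v j k, j <= k ->
  subst u k (subst v j t) = subst (subst u (k - j) v) j (subst u (S k) t).
Proof.
  induction t; intros; simpl.
  - index_cases.
    + subst n. replace k with (j + (k - j)) at 1 by lia.
      apply (subst_lift_comm v u 0 (k - j) j); lia.
    + subst. rewrite subst_lift by lia. reflexivity.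
  - f_equal. rewrite IHt by lia. reflexivity.
  - f_equal; auto.
Qed.

Lemma lift_subst0 : forall t u d k,
  lift d k (subst u 0 t) = subst (lift d k u) 0 (lift d (S k) t).
Proof. intros. rewrite lift_subst, Nat.sub_0_r by lia. reflexivity. Qed.

Lemma subst_subst0 : forall t u v k,
  subst u k (subst v 0 t) = subst (subst u k v) 0 (subst u (S k) t).
Proof. intros. rewrite subst_subst, Nat.sub_0_r by lia. reflexivity. Qed.

(** * Parallel reduction *)

Lemma betas_lam : forall a b, betas a b -> betas (Lam a) (Lam b).
Proof. induction 1; [apply rt_step; constructor; auto | apply rt_refl | eapply rt_trans; eauto]. Qed.

Lemma betas_appl : forall a b u, betas a b -> betas (App a u) (App b u).
Proof. induction 1; [apply rt_step; constructor; auto | apply rt_refl | eapply rt_trans; eauto]. Qed.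

Lemma betas_appr : forall a b u, betas a b -> betas (App u a) (App u b).
Proof. induction 1; [apply rt_step; constructor; auto | apply rt_refl | eapply rt_trans; eauto]. Qed.

Inductive par : term -> term -> Prop :=
| par_var : forall n, par (Var n) (Var n)
| par_lam : forall a b, par a b -> par (Lam a) (Lam b)
| par_app : forall f g u v, par f g -> par u v -> par (App f u) (App g v)
| par_redex : forall P P' Q Q', par P P' -> par Q Q' ->
    par (App (Lam P) Q) (subst Q' 0 P').

Lemma par_refl : forall t, par t t.
Proof. induction t; constructor; auto. Qed.

Lemma beta_par : forall a b, beta a b -> par a b.
Proof. induction 1; constructor; auto using par_refl. Qed.

Lemma par_betas : forall a b, par a b -> betas a b.
Proof.
  induction 1.
  - apply rt_refl.
  - apply betas_lam; auto.
  - eapply rt_trans; [apply betas_appl | apply betas_appr]; eauto.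
  - eapply rt_trans; [apply betas_appl, betas_lam; eauto |].
    eapply rt_trans; [apply betas_appr; eauto |].
    apply rt_step; constructor.
Qed.

Lemma par_lift : forall a b, par a b -> forall d k, par (lift d k a) (lift d k b).
Proof.
  induction 1; intros; simpl; try (constructor; auto).
  - apply par_refl.
  - rewrite lift_subst0. constructor; auto.
Qed.

Lemma par_subst : forall a b, par a b ->
  forall u u', par u u' -> forall k, par (subst u k a) (subst u' k b).
Proof.
  induction 1; intros; simpl; try (constructor; auto).
  - index_cases; try apply par_refl. apply par_lift; auto.
  - rewrite subst_subst0. constructor; auto.
Qed.

(** * Standardization and head normalization *)

Inductive whred : term -> term -> Prop :=
| whred_redex : forall P Q, whred (App (Lam P) Q) (subst Q 0 P)
| whred_appl : forall f f' a, whred f f' -> whred (App f a) (App f' a).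

(* Weak head steps first, then standard reduction inside the subterms. *)
Inductive std : term -> term -> Prop :=
| std_var : forall n, std (Var n) (Var n)
| std_lam : forall a b, std a b -> std (Lam a) (Lam b)
| std_app : forall f g u v, std f g -> std u v -> std (App f u) (App g v)
| std_whred : forall M M' N, whred M M' -> std M' N -> std M N.

Definition whreds : term -> term -> Prop := clos_refl_trans_1n term whred.

Lemma std_refl : forall t, std t t.
Proof. induction t; constructor; auto. Qed.

Lemma whred_lift : forall a b, whred a b -> forall d k, whred (lift d k a) (lift d k b).
Proof. induction 1; intros; simpl; [rewrite lift_subst0 |]; constructor; auto. Qed.

Lemma whred_subst : forall a b, whred a b -> forall u k, whred (subst u k a) (subst u k b).
Proof. induction 1; intros; simpl; [rewrite subst_subst0 |]; constructor; auto. Qed.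

Lemma std_lift : forall a b, std a b -> forall d k, std (lift d k a) (lift d k b).
Proof.
  induction 1; intros; simpl; try (constructor; auto).
  - apply std_refl.
  - eapply std_whred; [apply whred_lift; eauto | auto].
Qed.

Lemma std_subst : forall a b, std a b ->
  forall u u', std u u' -> forall k, std (subst u k a) (subst u' k b).
Proof.
  induction 1; intros; simpl; try (constructor; auto).
  - index_cases; try apply std_refl. apply std_lift; auto.
  - eapply std_whred; [apply whred_subst; eauto | auto].
Qed.

Lemma whreds_std : forall M M' N, whreds M M' -> std M' N -> std M N.
Proof. induction 1; intros; auto. eapply std_whred; eauto. Qed.

Lemma whreds_appl : forall f f' u, whreds f f' -> whreds (App f u) (App f' u).
Proof. induction 1; [constructor |]. econstructor; [apply whred_appl; eauto | auto]. Qed.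

Lemma std_lam_inv : forall M P, std M (Lam P) ->
  exists P0, whreds M (Lam P0) /\ std P0 P.
Proof.
  intros M L H; remember (Lam L) as N eqn:E; revert L E.
  induction H; intros L E; try discriminate.
  - injection E as ->. exists a; split; [constructor | auto].
  - destruct (IHstd _ E) as (P0 & HM & HP). exists P0; split; auto. econstructor; eauto.
Qed.

Lemma std_beta : forall M N N', std M N -> beta N N' -> std M N'.
Proof.
  intros M N N' H; revert N'; induction H; intros N' B.
  - inversion B.
  - inversion B; subst. constructor; auto.
  - inversion B; subst; try (constructor; auto).
    destruct (std_lam_inv _ _ H) as (P0 & Hwh & HP).
    eapply whreds_std; [apply whreds_appl; eauto |].
    eapply std_whred; [constructor | apply std_subst; auto].
  - eapply std_whred; eauto.
Qed.

Theorem betas_std : forall M N, betas M N -> std M N.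
Proof.
  intros M N H. apply clos_rt_rtn1 in H.
  induction H; [apply std_refl | eapply std_beta; eauto].
Qed.

Lemma hred_beta : forall a b, hred a b -> beta a b.
Proof. induction 1; constructor; auto. Qed.

Lemma hreds_betas : forall k a b, hreds k a b -> betas a b.
Proof.
  induction 1; [apply rt_refl |].
  eapply rt_trans; [apply rt_step, hred_beta |]; eauto.
Qed.

Lemma hred_isLam : forall a b, hred a b -> isLam a -> isLam b.
Proof. destruct 1; simpl; tauto. Qed.

Lemma hreds_isLam : forall k a b, hreds k a b -> isLam a -> isLam b.
Proof. induction 1; eauto using hred_isLam. Qed.

Lemma hreds_lam : forall k a b, hreds k a b -> hreds k (Lam a) (Lam b).
Proof. induction 1; econstructor; eauto. constructor; auto. Qed.

Lemma hreds_appl : forall k f h u, hreds k f h -> ~ isLam h ->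
  hreds k (App f u) (App h u).
Proof.
  induction 1; intros Hh; [constructor |].
  econstructor; [constructor | apply IHhreds; auto]; auto.
  intro L. apply Hh. eapply hreds_isLam; eauto using hred_isLam.
Qed.

Lemma whred_hred : forall a b, whred a b -> hred a b.
Proof. induction 1; constructor; auto. inversion H; simpl; tauto. Qed.

(* The neutral case is needed separately to handle the function part of an application. *)
Lemma std_head_normalizes : forall M N, std M N ->
  (neutral N -> exists k h, hreds k M h /\ neutral h) /\
  (is_hnf N -> exists k h, hreds k M h /\ is_hnf h).
Proof.
  induction 1 as [n | a b _ IH | f g u v _ IHf _ _ | M M' N Hwh _ IH].
  - split; intros _; exists 0, (Var n); split; repeat constructor.
  - split; intros Hn; inversion Hn as [? Hne | ? Hb]; subst; [inversion Hne |].
    destruct (proj2 IH Hb) as (k & h & Hr & Hh).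
    exists k, (Lam h); split; [apply hreds_lam | apply hnf_lam]; auto.
  - assert (Hne : neutral (App g v) -> exists k h, hreds k (App f u) h /\ neutral h).
    { inversion 1 as [| ? ? Hg]; subst.
      destruct (proj1 IHf Hg) as (k & h & Hr & Hh).
      exists k, (App h u); split; [apply hreds_appl | constructor]; auto.
      destruct Hh; simpl; tauto. }
    split; auto. inversion 1; subst.
    destruct (Hne H0) as (k & h & ? & ?). exists k, h; split; [| constructor]; auto.
  - split; intros Hn;
      [destruct (proj1 IH Hn) as (k & h & ? & ?) | destruct (proj2 IH Hn) as (k & h & ? & ?)];
      exists (S k), h; split; auto; econstructor; eauto using whred_hred.
Qed.

Corollary has_hnf_hreds : forall M, has_hnf M -> exists k h, hreds k M h /\ is_hnf h.
Proof. intros M (h & B & Hh). exact (proj2 (std_head_normalizes _ _ (betas_std _ _ B)) Hh). Qed.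

(** * Uniqueness of head normal forms *)

Lemma hred_det : forall a b c, hred a b -> hred a c -> b = c.
Proof.
  intros a b c H; revert c; induction H; intros c H'; inversion H'; subst;
    simpl in *; f_equal; auto; tauto.
Qed.

Lemma neutral_hred : forall t u, neutral t -> ~ hred t u.
Proof.
  intros t u H; revert u; induction H; intros u R; inversion R; subst.
  - inversion H.
  - eapply IHneutral; eauto.
Qed.

Lemma hnf_hred : forall t u, is_hnf t -> ~ hred t u.
Proof.
  intros t u H; revert u; induction H; intros u R; [eapply neutral_hred; eauto |].
  inversion R; subst. eapply IHis_hnf; eauto.
Qed.

Lemma hreds_hnf_unique : forall k t h k' h', hreds k t h -> is_hnf h ->
  hreds k' t h' -> is_hnf h' -> k = k' /\ h = h'.
Proof.
  intros k t h k' h' H; revert k' h'; induction H; intros k' h' Hh H' Hh'.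
  - inversion H'; subst; auto. exfalso; eapply (hnf_hred _ _ Hh); eauto.
  - inversion H'; subst; [exfalso; eapply (hnf_hred _ _ Hh'); eauto |].
    assert (u = u0) by (eapply hred_det; eauto); subst.
    destruct (IHhreds _ _ Hh H2 Hh'); subst; auto.
Qed.

(** * Head reduction along beta reduction *)

(* The last conjunct reflects lambdas; it is the strengthening that makes the
   induction go through the [hred_app] case. *)
Lemma par_hred : forall M M1 N, hred M M1 -> par M N ->
  exists N1, par M1 N1 /\ (N1 = N \/ (hred N N1 /\ (isLam N -> isLam M))).
Proof.
  intros M M1 N H; revert N; induction H as [P Q | f f' a Hf _ IH | t t' _ IH]; intros N HP.
  - inversion HP as [| | ? g ? v Hg Hv | ? P' ? Q' HP' HQ']; subst.
    + inversion Hg; subst. exists (subst v 0 b); split; [apply par_subst; auto |].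
      right; split; [constructor | simpl; tauto].
    + exists (subst Q' 0 P'); split; auto. apply par_subst; auto.
  - inversion HP as [| | ? g ? v Hg Hv |]; subst; [| exfalso; apply Hf; simpl; auto].
    destruct (IH _ Hg) as (g1 & Hp & [-> | [Hr Hl]]).
    + exists (App g v); split; [constructor | left]; auto.
    + exists (App g1 v); split; [constructor; auto | right; split; [| simpl; tauto]].
      constructor; tauto.
  - inversion HP as [| ? b Hb | |]; subst. destruct (IH _ Hb) as (g1 & Hp & [-> | [Hr Hl]]).
    + exists (Lam b); split; [constructor | left]; auto.
    + exists (Lam g1); split; [constructor | right; split; [constructor | simpl]]; auto.
Qed.

Inductive spine_red : term -> term -> Prop :=
| spine_var : forall n, spine_red (Var n) (Var n)
| spine_lam : forall a b, spine_red a b -> spine_red (Lam a) (Lam b)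
| spine_app : forall f g u v, spine_red f g -> betas u v -> spine_red (App f u) (App g v).

Lemma spine_red_refl : forall t, spine_red t t.
Proof. induction t; constructor; auto. apply rt_refl. Qed.

Lemma spine_red_trans : forall a b c, spine_red a b -> spine_red b c -> spine_red a c.
Proof.
  intros a b c H; revert c; induction H; intros c H'; inversion H'; subst; constructor; auto.
  eapply rt_trans; eauto.
Qed.

Lemma par_neutral : forall h N, neutral h -> par h N -> neutral N /\ spine_red h N.
Proof.
  intros h N Hn; revert N; induction Hn as [| f u Hf IH]; intros N P;
    inversion P as [| | ? g ? v Hg Hv |]; subst.
  - split; constructor.
  - destruct (IH _ Hg). split; constructor; auto using par_betas.
  - inversion Hf.
Qed.

Lemma par_hnf : forall h N, is_hnf h -> par h N -> is_hnf N /\ spine_red h N.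
Proof.
  intros h N Hh; revert N; induction Hh; intros N P.
  - destruct (par_neutral _ _ H P). split; [constructor |]; auto.
  - inversion P as [| ? b Hb | |]; subst. destruct (IHHh _ Hb). split; [apply hnf_lam | constructor]; auto.
Qed.

Lemma par_hreds_hnf : forall k M h N, hreds k M h -> is_hnf h -> par M N ->
  exists j h', j <= k /\ hreds j N h' /\ is_hnf h' /\ spine_red h h'.
Proof.
  intros k M h N Hr; revert N; induction Hr as [| k M M1 h Hst _ IH]; intros N Hh P.
  - destruct (par_hnf _ _ Hh P). exists 0, N; repeat split; auto; constructor.
  - destruct (par_hred _ _ _ Hst P) as (N1 & P1 & [-> | [HN _]]);
      destruct (IH _ Hh P1) as (j & h' & ? & ? & ? & ?).
    + exists j, h'; repeat split; auto.
    + exists (S j), h'; repeat split; auto; [lia | econstructor; eauto].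
Qed.

Theorem betas_hreds_hnf : forall M N k h, betas M N -> hreds k M h -> is_hnf h ->
  exists j h', j <= k /\ hreds j N h' /\ is_hnf h' /\ spine_red h h'.
Proof.
  intros M N k h B; revert k h. apply clos_rt_rt1n in B.
  induction B as [| M M1 N Hst _ IH]; intros k h Hr Hh.
  - exists k, h; repeat split; auto using spine_red_refl.
  - destruct (par_hreds_hnf _ _ _ _ Hr Hh (beta_par _ _ Hst)) as (j & h1 & ? & Hr1 & Hh1 & ?).
    destruct (IH _ _ Hr1 Hh1) as (j' & h' & ? & ? & ? & ?).
    exists j', h'; repeat split; eauto using spine_red_trans; lia.
Qed.

Lemma hreds_hnf_betas : forall M N k1 h1 k2 h2, betas M N ->
  hreds k1 M h1 -> is_hnf h1 -> hreds k2 N h2 -> is_hnf h2 -> k2 <= k1 /\ spine_red h1 h2.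
Proof.
  intros M N k1 h1 k2 h2 B R1 H1 R2 H2.
  destruct (betas_hreds_hnf _ _ _ _ B R1 H1) as (j & h & ? & R & Hh & ?).
  destruct (hreds_hnf_unique _ _ _ _ _ R Hh R2 H2); subst; auto.
Qed.

Lemma has_hnf_betas : forall M N, betas M N -> has_hnf M -> has_hnf N.
Proof.
  intros M N B HM. destruct (has_hnf_hreds _ HM) as (k & h & R & Hh).
  destruct (betas_hreds_hnf _ _ _ _ B R Hh) as (j & h' & _ & R' & Hh' & _).
  exists h'; split; eauto using hreds_betas.
Qed.

Lemma has_hnf_betas_inv : forall M N, betas M N -> has_hnf N -> has_hnf M.
Proof. intros M N B (h & BN & Hh). exists h; split; [eapply rt_trans; eauto | exact Hh]. Qed.

Lemma hreds_hnf_betas_inv : forall M N k h, betas M N -> hreds k N h -> is_hnf h ->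
  exists k' h', hreds k' M h' /\ is_hnf h'.
Proof.
  intros M N k h B R Hh. apply has_hnf_hreds, (has_hnf_betas_inv M N B).
  exists h; split; [eapply hreds_betas; eauto | exact Hh].
Qed.

(** * Comparing clocked Böhm trees *)

Definition tree_ge_at (T : term -> position -> label -> option nat -> Prop)
    (t u : term) (p : position) : Prop :=
  (forall l1 a1 l2 a2, T t p l1 a1 -> T u p l2 a2 -> l1 = l2 /\ ann_ge a1 a2) /\
  (forall l a1, T t p l a1 -> exists a2, T u p l a2 /\ ann_ge a1 a2) /\
  (forall l a2, T u p l a2 -> exists a1, T t p l a1 /\ ann_ge a1 a2).

Definition root_label (t : term) : label :=
  match t with Var n => LVar n | Lam _ => LLam | App _ _ => LApp end.

Lemma skel_at_nil_inv : forall h l a, skel_at h [] l a -> l = root_label h /\ a = None.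
Proof. inversion 1; simpl; auto. Qed.

Lemma skel_at_nil : forall h, skel_at h [] (root_label h) None.
Proof. destruct h; constructor. Qed.

Lemma cbt_at_nil_inv : forall t l a, cbt_at t [] l a ->
  (~ has_hnf t /\ l = LBot /\ a = None) \/
  (exists k h, hreds k t h /\ is_hnf h /\ l = root_label h /\ a = Some k).
Proof.
  inversion 1 as [| ? k h ? a0 Hr Hh Hs | ]; subst; [left; auto | right].
  apply skel_at_nil_inv in Hs as [-> _]. exists k, h; auto.
Qed.

Lemma cbt_at_cons_inv : forall t d p l a, cbt_at t (d :: p) l a ->
  exists k h, hreds k t h /\ is_hnf h /\ skel_at h (d :: p) l a.
Proof. inversion 1; subst; eauto. Qed.

Lemma skel_ge_nil : forall h1 h2, spine_red h1 h2 -> tree_ge_at skel_at h1 h2 [].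
Proof.
  intros h1 h2 Hs.
  assert (E : root_label h1 = root_label h2) by (destruct Hs; reflexivity).
  split; [| split].
  - intros l1 a1 l2 a2 A1 A2.
    apply skel_at_nil_inv in A1 as [-> ->]; apply skel_at_nil_inv in A2 as [-> ->].
    split; simpl; auto.
  - intros l a1 A1. apply skel_at_nil_inv in A1 as [-> ->].
    exists None; split; [rewrite E; apply skel_at_nil | exact I].
  - intros l a2 A2. apply skel_at_nil_inv in A2 as [-> ->].
    exists None; split; [rewrite <- E; apply skel_at_nil | exact I].
Qed.

Lemma skel_ge_cons : forall d p,
  (forall h1 h2, spine_red h1 h2 -> tree_ge_at skel_at h1 h2 p) ->
  (forall M N, betas M N -> tree_ge_at cbt_at M N p) ->
  forall h1 h2, spine_red h1 h2 -> tree_ge_at skel_at h1 h2 (d :: p).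
Proof.
  intros d p IHskel IHcbt h1 h2 Hs.
  destruct Hs as [n | a b Hab | f g u v Hfg Huv].
  - split; [| split]; intros; match goal with X : skel_at (Var _) _ _ _ |- _ => inversion X end.
  - destruct (IHskel _ _ Hab) as (S1 & S2 & S3). split; [| split].
    + intros l1 a1 l2 a2 A1 A2; inversion A1; inversion A2; subst; eauto.
    + intros l a1 A1; inversion A1; subst.
      destruct (S2 _ _ H4) as (a2 & ? & ?). exists a2; split; [constructor |]; auto.
    + intros l a2 A2; inversion A2; subst.
      destruct (S3 _ _ H4) as (a1 & ? & ?). exists a1; split; [constructor |]; auto.
  - destruct (IHskel _ _ Hfg) as (S1 & S2 & S3).
    destruct (IHcbt _ _ Huv) as (C1 & C2 & C3). split; [| split].
    + intros l1 a1 l2 a2 A1 A2; inversion A1; inversion A2; subst; try discriminate; eauto.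
    + intros l a1 A1; inversion A1; subst;
        [destruct (S2 _ _ H5) as (a2 & ? & ?) | destruct (C2 _ _ H5) as (a2 & ? & ?)];
        exists a2; split; try constructor; auto.
    + intros l a2 A2; inversion A2; subst;
        [destruct (S3 _ _ H5) as (a1 & ? & ?) | destruct (C3 _ _ H5) as (a1 & ? & ?)];
        exists a1; split; try constructor; auto.
Qed.

Lemma cbt_ge_nil : forall M N, betas M N -> tree_ge_at cbt_at M N [].
Proof.
  intros M N B. split; [| split].
  - intros l1 a1 l2 a2 HM HN.
    destruct (cbt_at_nil_inv _ _ _ HM) as [(NM & -> & ->) | (k1 & h1 & R1 & Hh1 & -> & ->)];
      destruct (cbt_at_nil_inv _ _ _ HN) as [(NN & -> & ->) | (k2 & h2 & R2 & Hh2 & -> & ->)].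
    + split; [reflexivity | exact I].
    + exfalso. apply NM, (has_hnf_betas_inv M N B).
      exists h2; split; eauto using hreds_betas.
    + exfalso. apply NN. apply (has_hnf_betas M); auto.
      exists h1; split; eauto using hreds_betas.
    + destruct (hreds_hnf_betas _ _ _ _ _ _ B R1 Hh1 R2 Hh2) as [Hk Hs].
      split; [destruct Hs; reflexivity | exact Hk].
  - intros l a1 HM.
    destruct (cbt_at_nil_inv _ _ _ HM) as [(NM & -> & ->) | (k1 & h1 & R1 & Hh1 & -> & ->)].
    + exists None; split; [constructor | exact I].
      intro HN. apply NM, (has_hnf_betas_inv M N B HN).
    + destruct (betas_hreds_hnf _ _ _ _ B R1 Hh1) as (j & h2 & Hj & R2 & Hh2 & Hs).
      exists (Some j); split; [| exact Hj].
      replace (root_label h1) with (root_label h2) by (destruct Hs; reflexivity).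
      eapply cbt_root; eauto using skel_at_nil.
  - intros l a2 HN.
    destruct (cbt_at_nil_inv _ _ _ HN) as [(NN & -> & ->) | (k2 & h2 & R2 & Hh2 & -> & ->)].
    + exists None; split; [constructor | exact I].
      intro HM. apply NN. eapply has_hnf_betas; eauto.
    + destruct (hreds_hnf_betas_inv _ _ _ _ B R2 Hh2) as (k1 & h1 & R1 & Hh1).
      destruct (hreds_hnf_betas _ _ _ _ _ _ B R1 Hh1 R2 Hh2) as [Hk Hs].
      exists (Some k1); split; [| exact Hk].
      replace (root_label h2) with (root_label h1) by (destruct Hs; reflexivity).
      eapply cbt_root; eauto using skel_at_nil.
Qed.

Lemma cbt_ge_cons : forall d p,
  (forall h1 h2, spine_red h1 h2 -> tree_ge_at skel_at h1 h2 (d :: p)) ->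
  forall M N, betas M N -> tree_ge_at cbt_at M N (d :: p).
Proof.
  intros d p IHskel M N B. split; [| split].
  - intros l1 a1 l2 a2 HM HN.
    destruct (cbt_at_cons_inv _ _ _ _ _ HM) as (k1 & h1 & R1 & Hh1 & S1).
    destruct (cbt_at_cons_inv _ _ _ _ _ HN) as (k2 & h2 & R2 & Hh2 & S2).
    destruct (hreds_hnf_betas _ _ _ _ _ _ B R1 Hh1 R2 Hh2) as [_ Hs].
    exact (proj1 (IHskel _ _ Hs) _ _ _ _ S1 S2).
  - intros l a1 HM.
    destruct (cbt_at_cons_inv _ _ _ _ _ HM) as (k1 & h1 & R1 & Hh1 & S1).
    destruct (betas_hreds_hnf _ _ _ _ B R1 Hh1) as (j & h2 & _ & R2 & Hh2 & Hs).
    destruct (proj1 (proj2 (IHskel _ _ Hs)) _ _ S1) as (a2 & S2 & Ha).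
    exists a2; split; [eapply cbt_sub |]; eauto.
  - intros l a2 HN.
    destruct (cbt_at_cons_inv _ _ _ _ _ HN) as (k2 & h2 & R2 & Hh2 & S2).
    destruct (hreds_hnf_betas_inv _ _ _ _ B R2 Hh2) as (k1 & h1 & R1 & Hh1).
    destruct (hreds_hnf_betas _ _ _ _ _ _ B R1 Hh1 R2 Hh2) as [_ Hs].
    destruct (proj2 (proj2 (IHskel _ _ Hs)) _ _ S2) as (a1 & S1 & Ha).
    exists a1; split; [eapply cbt_sub |]; eauto.
Qed.

Lemma skel_ge_and_cbt_ge : forall p,
  (forall h1 h2, spine_red h1 h2 -> tree_ge_at skel_at h1 h2 p) /\
  (forall M N, betas M N -> tree_ge_at cbt_at M N p).
Proof.
  induction p as [| d p [IHskel IHcbt]].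
  - split; [exact skel_ge_nil | exact cbt_ge_nil].
  - assert (Hskel := skel_ge_cons d p IHskel IHcbt).
    split; [exact Hskel | exact (cbt_ge_cons d p Hskel)].
Qed.

Theorem proposition6p5 : forall M N : term, betas M N ->
  forall p : position,
    (* same Boehm tree (same positions, same labels), clocks of M >= clocks of N *)
    (forall l1 a1 l2 a2, cbt_at M p l1 a1 -> cbt_at N p l2 a2 ->
       l1 = l2 /\ ann_ge a1 a2) /\
    (forall l a1, cbt_at M p l a1 -> exists a2, cbt_at N p l a2 /\ ann_ge a1 a2) /\
    (forall l a2, cbt_at N p l a2 -> exists a1, cbt_at M p l a1 /\ ann_ge a1 a2).
Proof.
  intros M N B p. exact (proj2 (skel_ge_and_cbt_ge p) M N B).
Qed.
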